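(* Let $\mathbb{F}_q$ be any finite field. Every element of $\operatorname{Mat}_2(\mathbb{F}_q)$ can be written as a sum of two matrices in $\operatorname{SL}_2(\mathbb{F}_q)$.
   Context: $\operatorname{SL}_2(\mathbb{F}_q)$ is the set of $2\times 2$ matrices over $\mathbb{F}_q$ of determinant $1$. *)

From mathcomp Require Import all_boot all_algebra.
Set Implicit Arguments. Unset Strict Implicit. Unset Printing Implicit Defensive.
Import GRing.Theory.
Local Open Scope ring_scope.

Definition SL2 {F : finFieldType} (M : 'M[F]_2) : bool := \det M == 1.

(* Subtract B = [[0, -1], [1, t]] from A = [[a, b], [c, d]]: then
   det (A - B) = a (d - t) - (b + 1) (c - 1) is affine in t, with slope -a, so
   when a <> 0 some t gives det (A - B) = 1; the case d <> 0 is symmetric, and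
   an anti-diagonal A is [[1, b], [0, 1]] + [[-1, 0], [c, -1]]. *)
From mathcomp Require Import all_boot all_algebra.
From mathcomp Require Import ring.
Set Implicit Arguments. Unset Strict Implicit. Unset Printing Implicit Defensive.
Import GRing.Theory.
Local Open Scope ring_scope.

Section Mx2.

Variable R : comNzRingType.

Definition mx2 (a b c d : R) : 'M[R]_2 :=
  \matrix_(i, j) if i == 0 then (if j == 0 then a else b)
                 else (if j == 0 then c else d).

Lemma mx2_entries (A : 'M[R]_2) : A = mx2 (A 0 0) (A 0 1) (A 1 0) (A 1 1).
Proof.
apply/matrixP => i j; rewrite !mxE.
by case: i => [[|[|i]] Hi] //; case: j => [[|[|j]] Hj] //=; congr (A _ _); apply: val_inj.
Qed.

Lemma det_mx2 (a b c d : R) : \det (mx2 a b c d) = a * d - b * c.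
Proof.
rewrite (expand_det_row _ 0) !big_ord_recl big_ord0 /cofactor !det_mx11 !mxE /=.
by rewrite expr0 expr1 mul1r mulN1r; ring.
Qed.

Lemma add_mx2 (a b c d a' b' c' d' : R) :
  mx2 a b c d + mx2 a' b' c' d' = mx2 (a + a') (b + b') (c + c') (d + d').
Proof. by apply/matrixP => i j; rewrite !mxE; case: (i == 0); case: (j == 0). Qed.

End Mx2.

Section SumOfTwoDet1.

Variable F : fieldType.

Definition sum_of_two_det1 (A : 'M[F]_2) : Prop :=
  exists B C : 'M[F]_2, \det B = 1 /\ \det C = 1 /\ A = B + C.

Lemma sum_of_two_det1_lead (a b c d : F) :
  a != 0 -> sum_of_two_det1 (mx2 a b c d).
Proof.
move=> a_neq0; set t := d - (1 + (b + 1) * (c - 1)) / a.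
exists (mx2 0 (-1) 1 t), (mx2 a (b + 1) (c - 1) (d - t)).
rewrite !det_mx2 add_mx2; split; [|split].
- by ring.
- by rewrite /t; field.
- by congr mx2; ring.
Qed.

Lemma sum_of_two_det1_trail (a b c d : F) :
  d != 0 -> sum_of_two_det1 (mx2 a b c d).
Proof.
move=> d_neq0; set t := a - (1 + (b + 1) * (c - 1)) / d.
exists (mx2 t (-1) 1 0), (mx2 (a - t) (b + 1) (c - 1) d).
rewrite !det_mx2 add_mx2; split; [|split].
- by ring.
- by rewrite /t; field.
- by congr mx2; ring.
Qed.

Lemma sum_of_two_det1_antidiag (b c : F) : sum_of_two_det1 (mx2 0 b c 0).
Proof.
exists (mx2 1 b 0 1), (mx2 (-1) 0 c (-1)).
by rewrite !det_mx2 add_mx2; split; [|split]; [ring | ring | congr mx2; ring].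
Qed.

Lemma sum_of_two_det1_all (A : 'M[F]_2) : sum_of_two_det1 A.
Proof.
rewrite (mx2_entries A).
have [a0|] := eqVneq (A 0 0) 0; last exact: sum_of_two_det1_lead.
have [d0|] := eqVneq (A 1 1) 0; last exact: sum_of_two_det1_trail.
by rewrite a0 d0; apply: sum_of_two_det1_antidiag.
Qed.

End SumOfTwoDet1.

Theorem proposition3p9 (F : finFieldType) (A : 'M[F]_2) :
  exists B C : 'M[F]_2, SL2 B /\ SL2 C /\ A = B + C.
Proof.
have [B [C [detB [detC ->]]]] := sum_of_two_det1_all A.
by exists B, C; rewrite /SL2 detB detC.
Qed.
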